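(* Let $\mathcal{I}$ be an instance of SNSAT with $|\mathcal{I}|=n$, and let $\mathcal{K}_\mathcal{I}$ and $\psi_n$ be the Kripke structure and formula associated with $\mathcal{I}$ as described in the context. Then $v_\mathcal{I}(x_n)=\top$ if and only if $\mathcal{K}_\mathcal{I}\models[B]\bot\to\psi_n$, i.e., every initial track of $\mathcal{K}_\mathcal{I}$ satisfies $[B]\bot\to\psi_n$.
   Context: SNSAT: an instance $\mathcal{I}$ consists of Boolean variables $X=\{x_1,\dots,x_n\}$ and propositional formulas $F_1(Z_1),F_2(x_1,Z_2),\dots,F_n(x_1,\dots,x_{n-1},Z_n)$, where $F_i$ uses variables among $x_1,\dots,x_{i-1}$ and $Z_i=\{z_i^1,\dots,z_i^{j_i}\}$, the sets $Z_i$ being pairwise disjoint and disjoint from $X$; $|\mathcal{I}|=n$. The valuation $v_\mathcal{I}$ of $X$ is defined by $v_\mathcal{I}(x_i)=\top$ iff $F_i(v_\mathcal{I}(x_1),\dots,v_\mathcal{I}(x_{i-1}),Z_i)$ is satisfiable. Kripke structures, tracks and semantics: a finite Kripke structure $(\mathcal{AP},W,\delta,\mu,w_0)$ has left-total $\delta\subseteq W\times W$, labelling $\mu:W\to2^{\mathcal{AP}}$ and initial state $w_0$; a track is a nonempty finite sequence of states consecutive in $\delta$; it is initial if its first state is $w_0$; $\mathrm{fst},\mathrm{lst}$ are its first/last state. Formulas use proposition letters, $\neg,\wedge$ (other connectives as abbreviations), $\top,\bot$, $\langle A\rangle$, $\langle B\rangle$, $[B]\psi=\neg\langle B\rangle\neg\psi$.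 $\rho\models p$ iff $p\in\mu(w)$ for all states $w$ of $\rho$; $\rho\models\langle A\rangle\psi$ iff some track $\rho'$ with $\mathrm{fst}(\rho')=\mathrm{lst}(\rho)$ satisfies $\psi$; $\rho\models\langle B\rangle\psi$ iff some proper prefix $\rho(1,i)$, $1\le i<|\rho|$, satisfies $\psi$. $\mathcal{K}\models\psi$ iff all initial tracks satisfy $\psi$. The $F_i$ are read as formulas over proposition letters $X\cup Z$. Construction: let $Z=\bigcup_iZ_i$, $R=\{r_1,\dots,r_n\}$, $R_i=R\setminus\{r_i\}$. $\mathcal{K}_\mathcal{I}$ has proposition letters $X\cup Z\cup\{s,t\}\cup R\cup\{p_{\overline{x_i}}:1\le i\le n\}$ and distinct states $s_0$ and, for each $i$, $w_{x_i},\overline{w_{x_i}},\overline{s_i}$, and $w_{z_i^u},\overline{w_{z_i^u}}$ for $1\le u\le j_i$. Labels: $\mu(w_{x_i})=X\cup Z\cup\{s,t\}\cup R_i$; $\mu(\overline{w_{x_i}})=(X\setminus\{x_i\})\cup Z\cup\{s,t\}\cup R_i\cup\{p_{\overline{x_i}}\}$; $\mu(w_{z_i^u})=X\cup Z\cup\{s,t\}\cup R_i$; $\mu(\overline{w_{z_i^u}})=X\cup(Z\setminus\{z_i^u\})\cup\{s,t\}\cup R_i$; $\mu(\overline{s_i})=X\cup Z\cup\{t\}\cup R_i$; $\mu(s_0)=X\cup Z\cup\{s\}\cup R$. Call $L_i^0=\{w_{x_i},\overline{w_{x_i}}\}$ and $L_i^u=\{w_{z_i^u},\overline{w_{z_i^u}}\}$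 for $1\le u\le j_i$. Transitions: $\overline{w_{x_i}}\to\overline{s_i}\to w_{x_i}$; every state of $L_i^{u}$ has an edge to both states of $L_i^{u+1}$ for $0\le u<j_i$; every state of $L_i^{j_i}$ has an edge to both states of $L_{i-1}^0$ if $i\ge2$, and to $s_0$ if $i=1$; $s_0\to s_0$. The initial state is $w_{x_n}$. Formulas: $\ell_{=2}=\langle B\rangle\top\wedge[B][B]\bot$; $\psi_0=\bot$ and for $k\ge1$, $\psi_k=\langle A\rangle\varphi_k$ with $\varphi_k=(s\wedge\neg t)\wedge\bigwedge_{i=1}^n\big((x_i\wedge\neg r_i)\to F_i(x_1,\dots,x_{i-1},Z_i)\big)\wedge[B]\Big(\big(\bigvee_{i=1}^n\langle A\rangle p_{\overline{x_i}}\big)\to\langle A\rangle\big(\neg s\wedge\ell_{=2}\wedge\langle A\rangle(\ell_{=2}\wedge\neg\psi_{k-1})\big)\Big)$. *)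

From Stdlib Require Import Arith List.
Import ListNotations.

(* Variables: X k is x_k ; Zv i u is z_i^u. *)
Inductive pvar : Type := X (k : nat) | Zv (i u : nat).

Inductive pform : Type :=
| PVar (v : pvar)
| PTop | PBot
| PNot (f : pform)
| PAnd (f g : pform)
| POr (f g : pform).

Fixpoint peval (a : pvar -> Prop) (f : pform) : Prop :=
  match f with
  | PVar v => a v
  | PTop => True
  | PBot => False
  | PNot g => ~ peval a g
  | PAnd g h => peval a g /\ peval a h
  | POr g h => peval a g \/ peval a h
  end.

Fixpoint pvars_ok (P : pvar -> Prop) (f : pform) : Prop :=
  match f with
  | PVar v => P v
  | PTop | PBot => True
  | PNot g => pvars_ok P g
  | PAnd g h | POr g h => pvars_ok P g /\ pvars_ok P h
  end.

(* An SNSAT instance: size n, |Z_i| = j i, formulas F i (for 1 <= i <= n). *)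
Record snsat : Type := { nI : nat; jI : nat -> nat; FI : nat -> pform }.

Definition snsat_wf (I : snsat) : Prop :=
  forall i, 1 <= i <= nI I ->
    pvars_ok (fun v => match v with
                       | X k => 1 <= k < i
                       | Zv i' u => i' = i /\ 1 <= u <= jI I i
                       end) (FI I i).

Definition sat_with (F : pform) (rho : nat -> Prop) : Prop :=
  exists z : nat -> nat -> bool,
    peval (fun v => match v with X k => rho k | Zv i u => z i u = true end) F.

(* vupto I m k = v_I(x_k) for 1 <= k <= m. *)
Fixpoint vupto (I : snsat) (m : nat) : nat -> Prop :=
  match m with
  | 0 => fun _ => False
  | S m' => fun k => if k <=? m' then vupto I m' k
                     else sat_with (FI I (S m')) (vupto I m')
  end.

Definition vI (I : snsat) (i : nat) : Prop := vupto I i i.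

Record kripke : Type := {
  KW : Type;
  KAP : Type;
  Kdelta : KW -> KW -> Prop;
  Kmu : KW -> KAP -> Prop;
  Kw0 : KW }.

Fixpoint consec {W} (d : W -> W -> Prop) (l : list W) : Prop :=
  match l with
  | x :: ((y :: _) as t) => d x y /\ consec d t
  | _ => True
  end.

Definition is_track (K : kripke) (rho : list (KW K)) : Prop :=
  rho <> [] /\ consec (Kdelta K) rho.

Fixpoint lst_opt {W} (l : list W) : option W :=
  match l with
  | [] => None
  | [x] => Some x
  | _ :: t => lst_opt t
  end.

Inductive hs (AP : Type) : Type :=
| HAtom (p : AP)
| HTop | HBot
| HNot (f : hs AP)
| HAnd (f g : hs AP)
| HA (f : hs AP)
| HB (f : hs AP).
Arguments HAtom {AP}. Arguments HTop {AP}. Arguments HBot {AP}.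
Arguments HNot {AP}. Arguments HAnd {AP}. Arguments HA {AP}. Arguments HB {AP}.

Definition HOr {AP} (f g : hs AP) : hs AP := HNot (HAnd (HNot f) (HNot g)).
Definition HImp {AP} (f g : hs AP) : hs AP := HNot (HAnd f (HNot g)).
Definition HBoxB {AP} (f : hs AP) : hs AP := HNot (HB (HNot f)).

Fixpoint hsat (K : kripke) (rho : list (KW K)) (f : hs (KAP K)) : Prop :=
  match f with
  | HAtom p => forall w, In w rho -> Kmu K w p
  | HTop => True
  | HBot => False
  | HNot g => ~ hsat K rho g
  | HAnd g h => hsat K rho g /\ hsat K rho h
  | HA g => exists rho', is_track K rho' /\ hd_error rho' = lst_opt rho
                         /\ hsat K rho' g
  | HB g => exists i, 1 <= i < length rho /\ hsat K (firstn i rho) g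
  end.

Definition kmodels (K : kripke) (f : hs (KAP K)) : Prop :=
  forall rho, is_track K rho -> hd_error rho = Some (Kw0 K) -> hsat K rho f.

(* Proposition letters: x_k, z_i^u, s, t, r_k, p_{bar x_k}. *)
Inductive ap : Type :=
| AX (k : nat) | AZ (i u : nat) | As | At | AR (k : nat) | APx (k : nat).

(* Raw states: s0, w_{x_i}, bar w_{x_i}, bar s_i, w_{z_i^u}, bar w_{z_i^u}. *)
Inductive rstate : Type :=
| S0
| Wx (i : nat) | Wxb (i : nat) | Sb (i : nat)
| Wz (i u : nat) | Wzb (i u : nat).

Section Construction.
Variable I : snsat.

Definition inrange (i : nat) : Prop := 1 <= i <= nI I.
Definition inZ (i u : nat) : Prop := inrange i /\ 1 <= u <= jI I i.

Definition valid (w : rstate) : Prop :=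
  match w with
  | S0 => True
  | Wx i | Wxb i | Sb i => inrange i
  | Wz i u | Wzb i u => inZ i u
  end.

Definition base_lab (i : nat) (p : ap) : Prop :=
  match p with
  | AX k => inrange k
  | AZ i' u => inZ i' u
  | As | At => True
  | AR k => inrange k /\ k <> i
  | APx _ => False
  end.

Definition rmu (w : rstate) (p : ap) : Prop :=
  match w with
  | Wx i => base_lab i p
  | Wxb i => (base_lab i p /\ p <> AX i) \/ p = APx i
  | Wz i u => base_lab i p
  | Wzb i u => base_lab i p /\ p <> AZ i u
  | Sb i => base_lab i p /\ p <> As
  | S0 => match p with
          | AX k => inrange k
          | AZ i' u => inZ i' u
          | As => True
          | At => False
          | AR k => inrange k
          | APx _ => False
          end
  end.

Definition inL (i u : nat) (w : rstate) : Prop :=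
  match u with
  | 0 => w = Wx i \/ w = Wxb i
  | _ => w = Wz i u \/ w = Wzb i u
  end.

Definition rdelta (w w' : rstate) : Prop :=
  (exists i, inrange i /\ w = Wxb i /\ w' = Sb i)
  \/ (exists i, inrange i /\ w = Sb i /\ w' = Wx i)
  \/ (exists i u, inrange i /\ u < jI I i /\ inL i u w /\ inL i (S u) w')
  \/ (exists i, inrange i /\ 2 <= i /\ inL i (jI I i) w /\ inL (i - 1) 0 w')
  \/ (inrange 1 /\ inL 1 (jI I 1) w /\ w' = S0)
  \/ (w = S0 /\ w' = S0).

Definition stateK : Type := { w : rstate | valid w }.

End Construction.

Definition KI (I : snsat) (hn : 1 <= nI I) : kripke :=
  {| KW := stateK I;
     KAP := ap;
     Kdelta := fun a b => rdelta I (proj1_sig a) (proj1_sig b);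
     Kmu := fun a p => rmu I (proj1_sig a) p;
     Kw0 := exist (valid I) (Wx (nI I)) (conj hn (le_n (nI I))) |}.

Fixpoint ptr (f : pform) : hs ap :=
  match f with
  | PVar (X k) => HAtom (AX k)
  | PVar (Zv i u) => HAtom (AZ i u)
  | PTop => HTop
  | PBot => HBot
  | PNot g => HNot (ptr g)
  | PAnd g h => HAnd (ptr g) (ptr h)
  | POr g h => HOr (ptr g) (ptr h)
  end.

Definition bigAnd (l : list (hs ap)) : hs ap := fold_right HAnd HTop l.
Definition bigOr (l : list (hs ap)) : hs ap := fold_right HOr HBot l.

Definition len2 : hs ap := HAnd (HB HTop) (HBoxB (HBoxB HBot)).

Fixpoint psi (I : snsat) (k : nat) : hs ap :=
  match k with
  | 0 => HBot
  | S k' =>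
    HA (HAnd (HAnd (HAtom As) (HNot (HAtom At)))
        (HAnd (bigAnd (map (fun i => HImp (HAnd (HAtom (AX i)) (HNot (HAtom (AR i))))
                                          (ptr (FI I i)))
                           (seq 1 (nI I))))
              (HBoxB (HImp (bigOr (map (fun i => HA (HAtom (APx i))) (seq 1 (nI I))))
                           (HA (HAnd (HNot (HAtom As))
                                     (HAnd len2 (HA (HAnd len2 (HNot (psi I k')))))))))))
  end.

(* By induction on k: for 1 <= m <= k, a track ending in w_{x_m} satisfies psi_k iff
   v_I(x_m) holds.  A track witnessing phi_k from w_{x_m} reaches s_0 (not labelled t),
   and along any track the level i of w_{x_i}, w_{z_i^u}, ... drops by at most one per step,
   so the track visits every layer below m; the state it picks in L_i^0 (resp. L_i^u)
   guesses the value of x_i (resp. z_i^u).  The conjunct for F_i forces every x_i guessed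
   true to be satisfiable given the guesses below it, while the [B]-conjunct sends each
   x_i guessed false through bar s_i back to w_{x_i}, where the induction hypothesis turns
   the negated psi_{k-1} into "v_I(x_i) is false".  So the guesses are exactly v_I, and
   v_I(x_m) follows.  Conversely, the track choosing w_{x_i} exactly for the true x_i and
   satisfying assignments of the Z_i witnesses phi_k.  An initial track satisfies [B]bot
   only if it has length one, so the theorem is the case k = m = n. *)

From Stdlib Require Import Arith List Lia Classical ClassicalEpsilon ProofIrrelevance.
Import ListNotations.

Section Lists.
Context {A : Type}.

Lemma consec_map {B} (d : B -> B -> Prop) (f : A -> B) l :
  consec d (map f l) <-> consec (fun a b => d (f a) (f b)) l.
Proof. induction l as [|a [|b t] IH]; simpl; tauto. Qed.

Lemma consec_pred (R : A -> A -> Prop) w t y :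
  consec R (w :: t) -> In y t -> exists p, In p (w :: t) /\ R p y.
Proof.
  revert w; induction t as [|w' t IH]; intros w Hc Hy; [destruct Hy|].
  destruct Hc as [Hw Hc]; destruct Hy as [<- | Hy].
  - exists w; simpl; auto.
  - destruct (IH w' Hc Hy) as [p [Hp HR]]. exists p; simpl in *; tauto.
Qed.

Lemma consec_le_head (R : A -> A -> Prop) (f : A -> nat) w t y :
  (forall a b, R a b -> f b <= f a) -> consec R (w :: t) -> In y (w :: t) -> f y <= f w.
Proof.
  intros Hf; revert w; induction t as [|w' t IH]; intros w Hc [<- | Hy]; auto.
  - destruct Hy.
  - destruct Hc as [Hw Hc]. specialize (IH w' Hc Hy). specialize (Hf _ _ Hw). lia.
Qed.

Lemma consec_intermediate_value (R : A -> A -> Prop) (f : A -> nat) w t y i :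
  (forall a b, R a b -> f a <= S (f b)) -> consec R (w :: t) -> In y (w :: t) ->
  f y <= i <= f w -> exists z, In z (w :: t) /\ f z = i.
Proof.
  intros Hf; revert w; induction t as [|w' t IH]; intros w Hc Hy Hi.
  - destruct Hy as [<- | []]. exists w; simpl; split; auto; lia.
  - destruct (Nat.eq_dec i (f w)) as [-> | Hne]; [exists w; simpl; auto|].
    destruct Hc as [Hw Hc]. destruct Hy as [<- | Hy]; [lia|].
    destruct (IH w' Hc Hy) as [z [Hz Ez]]; [specialize (Hf _ _ Hw); lia|].
    exists z; simpl in *; tauto.
Qed.

Lemma lst_opt_last (l : list A) d : l <> [] -> lst_opt l = Some (last l d).
Proof.
  induction l as [|a [|b t] IH]; intros H; [congruence | reflexivity |].
  apply IH; discriminate.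
Qed.

Lemma lst_opt_In (l : list A) x : lst_opt l = Some x -> In x l.
Proof.
  induction l as [|a [|b t] IH]; [discriminate | intros [= ->]; simpl; auto |].
  intros H; right; apply IH, H.
Qed.

Lemma lst_opt_map {B} (f : A -> B) l : lst_opt (map f l) = option_map f (lst_opt l).
Proof. induction l as [|a [|b t] IH]; simpl; auto. Qed.

Lemma In_removelast_In (l : list A) x : In x (removelast l) -> In x l.
Proof.
  induction l as [|a [|b t] IH]; simpl; [tauto | tauto |].
  intros [-> | Hx]; [left; reflexivity | right; apply IH, Hx].
Qed.

Lemma In_removelast_iff (l : list A) x :
  In x (removelast l) <-> exists i, 1 <= i < length l /\ lst_opt (firstn i l) = Some x.
Proof.
  split.
  - intros Hx. destruct (in_split _ _ Hx) as [a [b Eab]].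
    assert (Hl : l <> []) by (intros ->; destruct Hx).
    rewrite (app_removelast_last x Hl), Eab, <- app_assoc.
    exists (length a + 1). rewrite firstn_app_2; simpl.
    rewrite lst_opt_last with (d := x), last_last by (destruct a; discriminate).
    rewrite !length_app; simpl; rewrite length_app; split; [simpl; lia | reflexivity].
  - intros [i [Hi Hx]]. rewrite <- firstn_removelast in Hx by lia.
    apply lst_opt_In in Hx. rewrite <- (firstn_skipn i (removelast l)).
    apply in_or_app; auto.
Qed.

Lemma exists_map_proj1_sig (P : A -> Prop) (l : list A) :
  (forall x, In x l -> P x) -> exists l' : list {x | P x}, map (@proj1_sig _ P) l' = l.
Proof.
  induction l as [|x l IH]; intros H; [exists []; reflexivity|].
  destruct IH as [l' E]; [intros y Hy; apply H; simpl; auto|].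
  exists (exist P x (H x (or_introl eq_refl)) :: l'). simpl; congruence.
Qed.

End Lists.

Definition valuation (rho : nat -> Prop) (Z : nat -> nat -> Prop) (v : pvar) : Prop :=
  match v with X k => rho k | Zv i u => Z i u end.

Lemma peval_ext_on (P : pvar -> Prop) (a b : pvar -> Prop) f :
  pvars_ok P f -> (forall v, P v -> (a v <-> b v)) -> (peval a f <-> peval b f).
Proof.
  induction f as [v | | | g IH | g IHg h IHh | g IHg h IHh]; simpl; intros Hok H.
  - apply H, Hok.
  - reflexivity.
  - reflexivity.
  - rewrite IH by assumption. reflexivity.
  - destruct Hok. rewrite IHg, IHh by assumption. reflexivity.
  - destruct Hok. rewrite IHg, IHh by assumption. reflexivity.
Qed.

Section Valuation.
Variable J : snsat.
Hypothesis Hwf : snsat_wf J.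

Lemma peval_F_ext i a b : inrange J i ->
  (forall k, 1 <= k < i -> (a (X k) <-> b (X k))) ->
  (forall u, 1 <= u <= jI J i -> (a (Zv i u) <-> b (Zv i u))) ->
  (peval a (FI J i) <-> peval b (FI J i)).
Proof.
  intros Hi HX HZ. apply (peval_ext_on _ _ _ _ (Hwf i Hi)).
  intros [k | i' u]; [apply HX | intros [-> Hu]; apply HZ, Hu].
Qed.

Lemma vI_succ i : vI J (S i) <-> sat_with (FI J (S i)) (vupto J i).
Proof. unfold vI; cbn [vupto]. rewrite (proj2 (Nat.leb_gt (S i) i)) by lia. reflexivity. Qed.

Lemma vupto_vI m k : k <= m -> (vupto J m k <-> vI J k).
Proof.
  induction m as [|m IH]; intros Hk.
  - replace k with 0 by lia. reflexivity.
  - simpl. destruct (Nat.leb_spec k m) as [Hkm | Hkm].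
    + apply IH, Hkm.
    + replace k with (S m) by lia. rewrite vI_succ. reflexivity.
Qed.

Lemma vI_iff_sat_with i rho : inrange J i ->
  (forall k, 1 <= k < i -> (rho k <-> vI J k)) -> (vI J i <-> sat_with (FI J i) rho).
Proof.
  intros Hi Hrho. destruct i as [|i]; [unfold inrange in Hi; lia|].
  assert (E : forall z : nat -> nat -> bool,
    peval (valuation (vupto J i) (fun a u => z a u = true)) (FI J (S i)) <->
    peval (valuation rho (fun a u => z a u = true)) (FI J (S i))).
  { intros z; apply peval_F_ext; [exact Hi | | reflexivity].
    intros k Hk; simpl. rewrite vupto_vI, Hrho by lia. reflexivity. }
  rewrite vI_succ. split; intros [z Hz]; exists z; apply (E z), Hz.
Qed.

Lemma sat_with_valuation i rho Z : inrange J i ->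
  peval (valuation rho Z) (FI J i) -> sat_with (FI J i) rho.
Proof.
  intros Hi HZ. exists (fun a u => if excluded_middle_informative (Z a u) then true else false).
  revert HZ; apply peval_F_ext; [exact Hi | reflexivity |].
  intros u _; simpl. destruct (excluded_middle_informative _); intuition discriminate.
Qed.

Definition witness (i : nat) : nat -> nat -> bool :=
  epsilon (inhabits (fun _ _ => true))
    (fun z => peval (valuation (vupto J (pred i)) (fun a u => z a u = true)) (FI J i)).

Lemma witness_spec i : 1 <= i -> vI J i ->
  peval (valuation (vupto J (pred i)) (fun a u => witness i a u = true)) (FI J i).
Proof.
  destruct i as [|i]; [lia|]. intros _ Hv. apply vI_succ in Hv.
  exact (epsilon_spec _ _ Hv).
Qed.

End Valuation.

Definition lev (w : rstate) : nat :=
  match w with S0 => 0 | Wx i | Wxb i | Sb i | Wz i _ | Wzb i _ => i end.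

Lemma inL_cases i u w : inL i u w ->
  (u = 0 /\ (w = Wx i \/ w = Wxb i)) \/ (u <> 0 /\ (w = Wz i u \/ w = Wzb i u)).
Proof. destruct u; simpl; [left | right]; split; auto. Qed.

Ltac inv_rdelta H :=
  destruct H as [[?i [?Hi [?E1 ?E2]]] | [[?i [?Hi [?E1 ?E2]]]
    | [[?i [?u [?Hi [?Hu [?E1 ?E2]]]]] | [[?i [?Hi [?H2 [?E1 ?E2]]]]
    | [[?Hi [?E1 ?E2]] | [?E1 ?E2]]]]]];
  repeat match goal with
  | E : inL _ _ _ |- _ => apply inL_cases in E; destruct E as [[? [E | E]] | [? [E | E]]]
  end;
  subst; try discriminate;
  repeat match goal with E : ?C _ = ?C _ |- _ => injection E as E; subst end.

Section Structure.
Variable J : snsat.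

Lemma rmu_AX w k : rmu J w (AX k) <-> inrange J k /\ w <> Wxb k.
Proof. destruct w; simpl; intuition congruence. Qed.

Lemma rmu_AZ w i u : rmu J w (AZ i u) <-> inZ J i u /\ w <> Wzb i u.
Proof. destruct w; simpl; intuition congruence. Qed.

Lemma rmu_AR w k : inrange J k -> (rmu J w (AR k) <-> lev w <> k).
Proof. intros Hk; destruct w; simpl; unfold inrange in *; intuition (first [lia | discriminate]). Qed.

Lemma rmu_As w : rmu J w As <-> forall i, w <> Sb i.
Proof. destruct w; simpl; intuition (try congruence); eapply H; reflexivity. Qed.

Lemma rmu_At w : rmu J w At <-> w <> S0.
Proof. destruct w; simpl; intuition congruence. Qed.

Lemma rmu_APx w k : rmu J w (APx k) <-> w = Wxb k.
Proof. destruct w; simpl; intuition congruence. Qed.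

Lemma rdelta_lev w w' : rdelta J w w' -> lev w' <= lev w <= S (lev w').
Proof. intros H; inv_rdelta H; simpl; lia. Qed.

Lemma rdelta_S0 w' : rdelta J S0 w' -> w' = S0.
Proof. intros H; inv_rdelta H; reflexivity. Qed.

Lemma rdelta_Wxb_pred w j : rdelta J w (Wxb j) -> lev w = S j.
Proof. intros H; inv_rdelta H; simpl; lia. Qed.

Lemma rdelta_Wxb_Sb j j' : rdelta J (Wxb j) (Sb j') -> j' = j.
Proof. intros H; inv_rdelta H; reflexivity. Qed.

Lemma rdelta_Sb j w : rdelta J (Sb j) w -> w = Wx j.
Proof. intros H; inv_rdelta H; reflexivity. Qed.

Lemma track_In_removelast l w : consec (rdelta J) l -> In S0 l -> In w l -> w <> S0 ->
  In w (removelast l).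
Proof.
  induction l as [|a [|b t] IH]; intros Hc H0 Hw Hne; [destruct Hw | |].
  - destruct H0 as [E0 | []]; destruct Hw as [Ew | []]; congruence.
  - destruct Hc as [Hab Hc]. change (In w (a :: removelast (b :: t))).
    destruct Hw as [<- | Hw]; [left; reflexivity | right].
    apply IH; auto. destruct H0 as [E0 | H0]; auto.
    subst a; apply rdelta_S0 in Hab; subst; left; reflexivity.
Qed.

Lemma track_lev_le w t y : consec (rdelta J) (w :: t) -> In y (w :: t) -> lev y <= lev w.
Proof. apply consec_le_head. intros a b Hab; apply (rdelta_lev a b Hab). Qed.

Lemma track_Wxb_lt m t j : consec (rdelta J) (Wx m :: t) -> In (Wxb j) (Wx m :: t) -> j < m.
Proof.
  intros Hc [E | Hj]; [discriminate|].
  destruct (consec_pred _ _ _ _ Hc Hj) as [p [Hp Hpj]].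
  apply rdelta_Wxb_pred in Hpj. pose proof (track_lev_le _ _ _ Hc Hp). simpl in *; lia.
Qed.

Lemma track_crosses w t i : consec (rdelta J) (w :: t) -> In S0 (w :: t) -> i <= lev w ->
  exists z, In z (w :: t) /\ lev z = i.
Proof.
  intros Hc H0 Hi. apply (consec_intermediate_value _ _ _ _ _ _ (fun a b Hab => proj2 (rdelta_lev a b Hab)) Hc H0).
  simpl; lia.
Qed.

End Structure.

Definition ap_of_pvar (v : pvar) : ap :=
  match v with X k => AX k | Zv i u => AZ i u end.

Section Semantics.
Variable J : snsat.
Variable hn : 1 <= nI J.
Notation K := (KI J hn).
Notation st := (stateK J).
Notation pr := (@proj1_sig rstate (valid J)).

Lemma valid_In (rho : list st) w : In w (map pr rho) -> valid J w.
Proof. rewrite in_map_iff. intros [a [<- _]]. apply proj2_sig. Qed.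

Lemma is_track_iff (rho : list st) :
  is_track K rho <-> rho <> [] /\ consec (rdelta J) (map pr rho).
Proof. unfold is_track. rewrite consec_map. reflexivity. Qed.

Lemma is_track_pair (a b : st) : rdelta J (pr a) (pr b) -> is_track K [a; b].
Proof. intros H. split; [discriminate | split; [exact H | exact I]]. Qed.

Lemma is_track_len2 (rho : list st) x : is_track K rho -> hd_error (map pr rho) = Some x ->
  length rho = 2 -> exists a b, rho = [a; b] /\ pr a = x /\ rdelta J x (pr b).
Proof.
  intros [_ Hc] Hh Hl. destruct rho as [|a [|b [|c rho]]]; try discriminate.
  injection Hh as <-. exists a, b. split; [reflexivity | split; [reflexivity | apply Hc]].
Qed.

Lemma hsat_atom (rho : list st) p :
  hsat K rho (HAtom p) <-> forall w, In w (map pr rho) -> rmu J w p.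
Proof.
  simpl. split.
  - intros H w Hw. apply in_map_iff in Hw as [a [<- Ha]]. apply H, Ha.
  - intros H a Ha. apply (H (pr a)), in_map, Ha.
Qed.

Definition sat_from (g : hs ap) (x : rstate) : Prop :=
  exists rho : list st, is_track K rho /\ hd_error (map pr rho) = Some x /\ hsat K rho g.

Lemma hsat_HA (rho : list st) g x :
  lst_opt (map pr rho) = Some x -> (hsat K rho (HA g) <-> sat_from g x).
Proof.
  rewrite lst_opt_map. intros Hx. change (option_map pr (@lst_opt st rho) = Some x) in Hx.
  simpl; unfold sat_from.
  destruct (lst_opt rho) as [a|]; simpl in Hx; [injection Hx as <- | discriminate].
  split; intros [r [Ht [Hh Hg]]]; exists r; (split; [exact Ht | split; [| exact Hg]]);
    (destruct r as [|b r]; [discriminate|]); simpl in *; injection Hh as Hb.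
  - rewrite Hb. reflexivity.
  - f_equal. apply (eq_sig_hprop (fun _ => proof_irrelevance _)), Hb.
Qed.

Lemma sat_from_atom p x : sat_from (HAtom p) x <-> valid J x /\ rmu J x p.
Proof.
  split.
  - intros [[|a r] [_ [Hh Hp]]]; [discriminate|]. simpl in Hh; injection Hh as <-.
    split; [apply proj2_sig | apply (proj1 (hsat_atom _ p) Hp), in_eq].
  - intros [Hx Hp]. exists [exist _ x Hx]. repeat split; [discriminate|].
    apply hsat_atom. intros w [<- | []]. exact Hp.
Qed.

Lemma hsat_HImp (rho : list st) f g :
  hsat K rho (HImp f g) <-> (hsat K rho f -> hsat K rho g).
Proof. simpl. split; [intros H Hf; apply NNPP; tauto | tauto]. Qed.

Lemma hsat_BoxB (rho : list st) g :
  hsat K rho (HBoxB g) <-> forall i, 1 <= i < length rho -> hsat K (firstn i rho) g.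
Proof.
  simpl. split.
  - intros H i Hi. apply NNPP. intros Hn. apply H. exists i. auto.
  - intros H [i [Hi Hn]]. apply Hn, H, Hi.
Qed.

Lemma hsat_BoxB_bot (rho : list st) : hsat K rho (HBoxB HBot) <-> length rho <= 1.
Proof.
  rewrite hsat_BoxB. split.
  - intros H. apply Nat.nlt_ge. intros Hl. apply (H 1). lia.
  - intros Hl i Hi. lia.
Qed.

(* [[B] g] quantifies over proper prefixes, whose last states are those of [removelast]. *)
Lemma hsat_BoxB_last (rho : list st) g (G : rstate -> Prop) :
  (forall (P : list st) x, lst_opt (map pr P) = Some x -> (hsat K P g <-> G x)) ->
  (hsat K rho (HBoxB g) <-> forall x, In x (removelast (map pr rho)) -> G x).
Proof.
  intros HG. rewrite hsat_BoxB. split.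
  - intros H x Hx. apply In_removelast_iff in Hx as [i [Hi Hx]].
    rewrite length_map in Hi. rewrite firstn_map in Hx. apply (HG _ _ Hx), H, Hi.
  - intros H i Hi.
    assert (Hne : map pr (firstn i rho) <> []).
    { destruct rho, i; simpl in *; [lia | lia | lia | discriminate]. }
    apply (HG _ (last (map pr (firstn i rho)) S0)); [apply lst_opt_last, Hne|].
    apply H, In_removelast_iff. exists i.
    rewrite length_map, firstn_map. split; [exact Hi | apply lst_opt_last, Hne].
Qed.

Lemma hsat_len2 (rho : list st) : hsat K rho len2 <-> length rho = 2.
Proof.
  unfold len2. change (hsat K rho (HB HTop) /\ hsat K rho (HBoxB (HBoxB HBot)) <-> length rho = 2).
  rewrite hsat_BoxB. setoid_rewrite hsat_BoxB_bot. simpl. split.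
  - intros [[i [Hi _]] H]. destruct (Nat.eq_dec (length rho) 2) as [|Hl]; [assumption|].
    specialize (H 2). rewrite length_firstn in H. lia.
  - intros Hl. split; [exists 1; split; [lia | exact I]|].
    intros i Hi. rewrite length_firstn. lia.
Qed.

Lemma hsat_bigAnd (rho : list st) (f : nat -> hs ap) l :
  hsat K rho (bigAnd (map f l)) <-> forall i, In i l -> hsat K rho (f i).
Proof.
  induction l as [|a l IH]; simpl; [tauto|].
  change (hsat K rho (f a) /\ hsat K rho (bigAnd (map f l)) <->
          forall i, a = i \/ In i l -> hsat K rho (f i)).
  rewrite IH. split; [intros [Ha Hl] i [<- | Hi]; auto | auto].
Qed.

Lemma hsat_bigOr (rho : list st) (f : nat -> hs ap) l :
  hsat K rho (bigOr (map f l)) <-> exists i, In i l /\ hsat K rho (f i).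
Proof.
  induction l as [|a l IH]; simpl; [firstorder|].
  change (~ (~ hsat K rho (f a) /\ ~ hsat K rho (bigOr (map f l))) <->
          exists i, (a = i \/ In i l) /\ hsat K rho (f i)).
  rewrite IH. split.
  - intros H. apply NNPP. intros Hn. apply H. split; intros Hx; apply Hn; firstorder.
  - intros [i [[<- | Hi] Hf]] [H1 H2]; [auto | apply H2; eauto].
Qed.

Lemma hsat_ptr (rho : list st) f :
  hsat K rho (ptr f) <->
  peval (fun v => forall w, In w (map pr rho) -> rmu J w (ap_of_pvar v)) f.
Proof.
  induction f as [[k | i u] | | | g IH | g IHg h IHh | g IHg h IHh]; simpl.
  - apply hsat_atom.
  - apply hsat_atom.
  - reflexivity.
  - reflexivity.
  - rewrite IH; reflexivity.
  - rewrite IHg, IHh; reflexivity.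
  - unfold HOr; simpl. rewrite IHg, IHh. tauto.
Qed.

End Semantics.

Definition track_valuation (l : list rstate) : pvar -> Prop :=
  valuation (fun k => ~ In (Wxb k) l) (fun i u => ~ In (Wzb i u) l).

Section Tracks.
Variable J : snsat.
Hypothesis Hwf : snsat_wf J.

Lemma vI_of_checked_track m t (l := Wx m :: t) : inrange J m ->
  consec (rdelta J) l -> In S0 l ->
  (forall i, inrange J i -> ~ In (Wxb i) l -> (exists w, In w l /\ lev w = i) ->
     peval (track_valuation l) (FI J i)) ->
  (forall j, In (Wxb j) l -> ~ vI J j) -> vI J m.
Proof.
  intros Hm Hc H0 Hchk Hneg.
  assert (Henc : forall i, 1 <= i <= m -> (~ In (Wxb i) l <-> vI J i)).
  { induction i as [i IH] using lt_wf_ind. intros Hi. split.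
    - intros Hx. assert (Hir : inrange J i) by (unfold inrange in *; lia).
      apply (vI_iff_sat_with J Hwf i (fun k => ~ In (Wxb k) l) Hir); [intros k Hk; apply IH; lia|].
      apply (sat_with_valuation J Hwf i _ (fun a u => ~ In (Wzb a u) l) Hir).
      apply Hchk; [exact Hir | exact Hx |].
      apply (track_crosses J _ _ _ Hc H0). simpl; lia.
    - intros Hv Hx. exact (Hneg i Hx Hv). }
  apply Henc; [unfold inrange in Hm; lia|].
  intros Hx. apply (track_Wxb_lt J) in Hx; [lia | exact Hc].
Qed.

Definition xstate (i : nat) : rstate :=
  if excluded_middle_informative (vI J i) then Wx i else Wxb i.

Definition zstate (i u : nat) : rstate :=
  if witness J i i u then Wz i u else Wzb i u.

Fixpoint descent (i : nat) : list rstate :=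
  match i with
  | 0 => [S0]
  | S i' => xstate (S i') :: map (zstate (S i')) (seq 1 (jI J (S i'))) ++ descent i'
  end.

Lemma xstate_cases a : (xstate a = Wx a /\ vI J a) \/ (xstate a = Wxb a /\ ~ vI J a).
Proof. unfold xstate. destruct (excluded_middle_informative _); auto. Qed.

Lemma zstate_cases a u :
  (zstate a u = Wz a u /\ witness J a a u = true) \/
  (zstate a u = Wzb a u /\ witness J a a u = false).
Proof. unfold zstate. destruct (witness J a a u); auto. Qed.

Lemma In_descent w i : In w (descent i) <->
  w = S0 \/ exists a, 1 <= a <= i /\
    (w = xstate a \/ exists u, 1 <= u <= jI J a /\ w = zstate a u).
Proof.
  induction i as [|i IH]; simpl.
  - split; [intros [<- | []]; auto | intros [-> | [a [Ha _]]]; [auto | lia]].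
  - rewrite in_app_iff, in_map_iff, IH. setoid_rewrite in_seq. split.
    + intros [<- | [[u [<- Hu]] | [-> | [a [Ha Hw]]]]]; auto.
      * right; exists (S i); split; [lia | left; reflexivity].
      * right; exists (S i); split; [lia | right; exists u; split; [lia | reflexivity]].
      * right; exists a; split; [lia | exact Hw].
    + intros [-> | [a [Ha Hw]]]; auto.
      destruct (Nat.eq_dec a (S i)) as [-> | Hne].
      * destruct Hw as [-> | [u [Hu ->]]]; auto. right; left; exists u; split; [reflexivity | lia].
      * right; right; right; exists a; split; [lia | exact Hw].
Qed.

Lemma descent_valid i w : i <= nI J -> In w (descent i) -> valid J w.
Proof.
  intros Hi. rewrite In_descent. unfold valid, inZ, inrange.
  intros [-> | [a [Ha [-> | [u [Hu ->]]]]]]; [exact I | |].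
  - destruct (xstate_cases a) as [[-> _] | [-> _]]; lia.
  - destruct (zstate_cases a u) as [[-> _] | [-> _]]; lia.
Qed.

Lemma descent_rmu_As i w : In w (descent i) -> rmu J w As.
Proof.
  rewrite In_descent, rmu_As. intros [-> | [a [_ [-> | [u [_ ->]]]]]] j; [discriminate | |].
  - destruct (xstate_cases a) as [[-> _] | [-> _]]; discriminate.
  - destruct (zstate_cases a u) as [[-> _] | [-> _]]; discriminate.
Qed.

Lemma descent_lev i w : In w (descent i) -> lev w <= i.
Proof.
  rewrite In_descent. intros [-> | [a [Ha [-> | [u [_ ->]]]]]]; [simpl; lia | |].
  - destruct (xstate_cases a) as [[-> _] | [-> _]]; simpl; lia.
  - destruct (zstate_cases a u) as [[-> _] | [-> _]]; simpl; lia.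
Qed.

Lemma In_descent_Wxb i k : In (Wxb k) (descent i) <-> 1 <= k <= i /\ ~ vI J k.
Proof.
  rewrite In_descent. split.
  - intros [E | [a [Ha [E | [u [_ E]]]]]]; [discriminate | |].
    + destruct (xstate_cases a) as [[E' _] | [E' Hv]]; rewrite E' in E; [discriminate|].
      injection E as ->. auto.
    + destruct (zstate_cases a u) as [[E' _] | [E' _]]; rewrite E' in E; discriminate.
  - intros [Hk Hv]. right; exists k; split; [exact Hk | left].
    destruct (xstate_cases k) as [[_ Hv'] | [-> _]]; [contradiction | reflexivity].
Qed.

Lemma In_descent_Wzb i a u : 1 <= a <= i -> 1 <= u <= jI J a ->
  (In (Wzb a u) (descent i) <-> witness J a a u = false).
Proof.
  intros Ha Hu. rewrite In_descent. split.
  - intros [E | [a' [_ [E | [u' [_ E]]]]]]; [discriminate | |].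
    + destruct (xstate_cases a') as [[E' _] | [E' _]]; rewrite E' in E; discriminate.
    + destruct (zstate_cases a' u') as [[E' _] | [E' Hz]]; rewrite E' in E; [discriminate|].
      injection E as -> ->. exact Hz.
  - intros Hz. right; exists a; split; [exact Ha|]. right; exists u; split; [exact Hu|].
    destruct (zstate_cases a u) as [[_ Hz'] | [-> _]]; [congruence | reflexivity].
Qed.

Lemma zstate_inL i u : 1 <= u -> inL i u (zstate i u).
Proof. destruct u; [lia|]. intros _. unfold zstate. destruct (witness J i i (S u)); simpl; auto. Qed.

Lemma consec_layer i c u w rest : inrange J i -> inL i u w -> u + c = jI J i ->
  (forall w', inL i (jI J i) w' -> consec (rdelta J) (w' :: rest)) ->
  consec (rdelta J) (w :: map (zstate i) (seq (S u) c) ++ rest).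
Proof.
  intros Hi; revert u w; induction c as [|c IH]; intros u w Hw Hu Hrest.
  - apply Hrest. replace (jI J i) with u by lia. exact Hw.
  - split.
    + right; right; left. exists i, u.
      split; [exact Hi | split; [lia | split; [exact Hw | apply zstate_inL; lia]]].
    + apply IH; [apply zstate_inL; lia | lia | exact Hrest].
Qed.

Lemma descent_consec i : i <= nI J -> consec (rdelta J) (descent i).
Proof.
  induction i as [|i IH]; intros Hi; [exact I|].
  apply (consec_layer (S i) (jI J (S i)) 0); [unfold inrange; lia | | reflexivity |].
  { destruct (xstate_cases (S i)) as [[-> _] | [-> _]]; simpl; auto. }
  intros w' Hw'. destruct i as [|i].
  - split; [|exact I]. right; right; right; right; left. split; [unfold inrange; lia | split; [exact Hw' | reflexivity]].
  - split; [|apply IH; lia]. right; right; right; left.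
    exists (S (S i)). split; [unfold inrange; lia|]. split; [lia | split; [exact Hw'|]].
    destruct (xstate_cases (S i)) as [[-> _] | [-> _]]; simpl; auto.
Qed.

Lemma descent_hd m : 1 <= m -> vI J m -> hd_error (descent m) = Some (Wx m).
Proof.
  destruct m as [|m]; [lia|]. intros _ Hv. simpl.
  destruct (xstate_cases (S m)) as [[-> _] | [_ Hv']]; [reflexivity | contradiction].
Qed.

Lemma descent_checks m i : vI J m -> inrange J i -> ~ In (Wxb i) (descent m) ->
  (exists w, In w (descent m) /\ lev w = i) -> peval (track_valuation (descent m)) (FI J i).
Proof.
  intros Hv Hi Hx [w [Hw Hlw]].
  assert (Him : i <= m) by (rewrite <- Hlw; apply descent_lev, Hw).
  assert (Hvi : vI J i).
  { destruct (Nat.eq_dec i m) as [-> | Hne]; [exact Hv|].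
    apply NNPP. intros Hn. apply Hx, In_descent_Wxb. unfold inrange in Hi; split; [lia | exact Hn]. }
  generalize (witness_spec J i ltac:(unfold inrange in Hi; lia) Hvi).
  apply (peval_F_ext J Hwf i _ _ Hi).
  - intros k Hk. simpl. rewrite vupto_vI, In_descent_Wxb by lia. split; [|tauto].
    intros Hn. apply NNPP. intros Hnv. apply Hn. split; [lia | exact Hnv].
  - intros u Hu. simpl. rewrite In_descent_Wzb by (unfold inrange in Hi; lia).
    destruct (witness J i i u); split; congruence.
Qed.

End Tracks.

Section Correctness.
Variable J : snsat.
Hypothesis Hwf : snsat_wf J.
Variable hn : 1 <= nI J.
Notation K := (KI J hn).
Notation st := (stateK J).
Notation pr := (@proj1_sig rstate (valid J)).

Definition Fcheck (i : nat) : hs ap :=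
  HImp (HAnd (HAtom (AX i)) (HNot (HAtom (AR i)))) (ptr (FI J i)).

Definition refute (k : nat) : hs ap :=
  HAnd (HNot (HAtom As)) (HAnd len2 (HA (HAnd len2 (HNot (psi J k))))).

Definition negcheck (k : nat) : hs ap :=
  HBoxB (HImp (bigOr (map (fun i => HA (HAtom (APx i))) (seq 1 (nI J)))) (HA (refute k))).

(* The paper's phi_{k+1}. *)
Definition phi (k : nat) : hs ap :=
  HAnd (HAnd (HAtom As) (HNot (HAtom At)))
       (HAnd (bigAnd (map Fcheck (seq 1 (nI J)))) (negcheck k)).

Lemma psi_succ k : psi J (S k) = HA (phi k).
Proof. reflexivity. Qed.

Definition psi_correct (k : nat) : Prop :=
  forall m (rho : list st), inrange J m -> m <= k ->
  lst_opt (map pr rho) = Some (Wx m) -> (hsat K rho (psi J k) <-> vI J m).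

Lemma hsat_ptr_F (rho : list st) i : inrange J i ->
  (hsat K rho (ptr (FI J i)) <-> peval (track_valuation (map pr rho)) (FI J i)).
Proof.
  intros Hi. rewrite hsat_ptr. apply (peval_F_ext J Hwf i _ _ Hi); simpl.
  - intros k Hk. setoid_rewrite rmu_AX.
    split; [intros H Hx; apply (H _ Hx); reflexivity|].
    intros Hx w Hw; split; [unfold inrange in *; lia | intros ->; contradiction].
  - intros u Hu. setoid_rewrite rmu_AZ.
    split; [intros H Hx; apply (H _ Hx); reflexivity|].
    intros Hx w Hw; split; [split; [exact Hi | exact Hu] | intros ->; contradiction].
Qed.

Lemma hsat_Fcheck (rho : list st) (l := map pr rho) i : inrange J i ->
  (hsat K rho (Fcheck i) <->
   (~ In (Wxb i) l -> (exists w, In w l /\ lev w = i) -> peval (track_valuation l) (FI J i))).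
Proof.
  intros Hi. subst l. unfold Fcheck. rewrite hsat_HImp.
  change (hsat K rho (HAnd (HAtom (AX i)) (HNot (HAtom (AR i))))) with
    (hsat K rho (HAtom (AX i)) /\ ~ hsat K rho (HAtom (AR i))).
  rewrite <- (hsat_ptr_F rho i Hi), !hsat_atom.
  setoid_rewrite rmu_AX. setoid_rewrite (rmu_AR J _ _ Hi). split.
  - intros H Hx [w [Hw Hlw]]. apply H. split.
    + intros w' Hw'. split; [exact Hi | intros ->; contradiction].
    + intros Hr. exact (Hr w Hw Hlw).
  - intros H [Hx Hr]. apply H.
    + intros Hw. exact (proj2 (Hx _ Hw) eq_refl).
    + apply NNPP. intros Hne. apply Hr. intros w Hw Hlw. apply Hne. eauto.
Qed.

Lemma hsat_Fchecks (rho : list st) (l := map pr rho) :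
  hsat K rho (bigAnd (map Fcheck (seq 1 (nI J)))) <->
  forall i, inrange J i -> ~ In (Wxb i) l -> (exists w, In w l /\ lev w = i) ->
    peval (track_valuation l) (FI J i).
Proof.
  rewrite hsat_bigAnd. setoid_rewrite in_seq. split.
  - intros H i Hi. apply hsat_Fcheck, H; [exact Hi | unfold inrange in Hi; lia].
  - intros H i Hi. apply hsat_Fcheck; [unfold inrange; lia | apply H; unfold inrange; lia].
Qed.

Lemma sat_from_refute k j : psi_correct k -> inrange J j -> j <= k ->
  (sat_from J hn (refute k) (Wxb j) <-> ~ vI J j).
Proof.
  intros Hq Hj Hjk. split.
  - intros [r [Ht [Hh [Hns [Hl2 HA2]]]]]. apply hsat_len2 in Hl2.
    destruct (is_track_len2 J hn r _ Ht Hh Hl2) as [a [c [-> [Ha Hac]]]].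
    assert (Hc : exists j', pr c = Sb j').
    { apply NNPP. intros Hn. apply Hns, hsat_atom. intros w [<- | [<- | []]].
      - rewrite Ha. apply rmu_As. discriminate.
      - apply rmu_As. intros i Ei. eauto. }
    destruct Hc as [j' Hc]. rewrite Hc in Hac. apply rdelta_Wxb_Sb in Hac. subst j'.
    apply (hsat_HA J hn [a; c] _ (Sb j)) in HA2; [|simpl; rewrite Hc; reflexivity].
    destruct HA2 as [r2 [Ht2 [Hh2 [Hl2' Hnp]]]]. apply hsat_len2 in Hl2'.
    destruct (is_track_len2 J hn r2 _ Ht2 Hh2 Hl2') as [d [e [-> [_ Hde]]]].
    apply rdelta_Sb in Hde.
    intros Hv. apply Hnp, (Hq j); [exact Hj | exact Hjk | simpl; rewrite Hde; reflexivity | exact Hv].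
  - intros Hv.
    set (a := exist (valid J) (Wxb j) Hj : st).
    set (c := exist (valid J) (Sb j) Hj : st).
    set (e := exist (valid J) (Wx j) Hj : st).
    exists [a; c]. split; [apply is_track_pair; left; exists j; auto|]. split; [reflexivity|].
    split; [|split; [apply hsat_len2; reflexivity|]].
    + intros Hs. rewrite hsat_atom in Hs.
      apply (proj1 (rmu_As J (Sb j)) (Hs (Sb j) (or_intror (or_introl eq_refl))) j eq_refl).
    + exists [c; e]. split; [apply is_track_pair; right; left; exists j; auto|].
      split; [reflexivity|]. split; [apply hsat_len2; reflexivity|].
      intros Hp. apply Hv, (Hq j [c; e] Hj Hjk); [reflexivity | exact Hp].
Qed.

Lemma hsat_negcheck k m (rho : list st) : psi_correct k -> m <= S k -> is_track K rho ->
  hd_error (map pr rho) = Some (Wx m) -> In S0 (map pr rho) ->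
  (hsat K rho (negcheck k) <-> forall j, In (Wxb j) (map pr rho) -> ~ vI J j).
Proof.
  intros Hq Hm Ht Hh H0. apply is_track_iff in Ht as [_ Hc].
  destruct (map pr rho) as [|w t] eqn:El; [discriminate|]. injection Hh as ->.
  unfold negcheck. rewrite (hsat_BoxB_last J hn rho _
    (fun x => (exists j, inrange J j /\ x = Wxb j) -> sat_from J hn (refute k) x)).
  2: { intros P x Hx. rewrite hsat_HImp, hsat_bigOr, (hsat_HA J hn P _ x Hx).
       setoid_rewrite (hsat_HA J hn P _ x Hx). setoid_rewrite sat_from_atom.
       setoid_rewrite rmu_APx. setoid_rewrite in_seq. unfold inrange.
       split.
       - intros H [j [Hj ->]]. apply H. exists j. simpl; unfold inrange; repeat split; lia.
       - intros H [j [Hj [_ ->]]]. apply H. exists j. split; [lia | reflexivity]. }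
  rewrite El. split.
  - intros H j Hx. assert (Hjr : inrange J j) by (apply (valid_In J rho (Wxb j)); rewrite El; exact Hx).
    apply (sat_from_refute k j Hq Hjr); [apply (track_Wxb_lt J) in Hx; auto; lia|].
    apply H; [apply (track_In_removelast J); auto; discriminate | eauto].
  - intros H x Hx [j [Hjr ->]]. apply In_removelast_In in Hx.
    apply (sat_from_refute k j Hq Hjr); [apply (track_Wxb_lt J) in Hx; auto; lia | auto].
Qed.

Lemma vI_of_sat_from_phi k m : psi_correct k -> inrange J m -> m <= S k ->
  sat_from J hn (phi k) (Wx m) -> vI J m.
Proof.
  intros Hq Hm Hmk [rho [Ht [Hh [[Hs Hnt] [Hchk Hneg]]]]].
  assert (H0 : In S0 (map pr rho)).
  { apply NNPP. intros Hn. apply Hnt, hsat_atom. intros w Hw. apply rmu_At. intros ->. contradiction. }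
  rewrite (hsat_negcheck k m rho Hq Hmk Ht Hh H0) in Hneg.
  rewrite hsat_Fchecks in Hchk.
  apply is_track_iff in Ht as [_ Hc].
  destruct (map pr rho) as [|w t]; [discriminate|]. injection Hh as ->.
  exact (vI_of_checked_track J Hwf m t Hm Hc H0 Hchk Hneg).
Qed.

Lemma sat_from_phi_of_vI k m : psi_correct k -> inrange J m -> m <= S k -> vI J m ->
  sat_from J hn (phi k) (Wx m).
Proof.
  intros Hq Hm Hmk Hv. assert (Hmn : m <= nI J) by (unfold inrange in Hm; lia).
  destruct (exists_map_proj1_sig (valid J) (descent J m) (fun w => descent_valid J m w Hmn))
    as [rho El].
  assert (Hh : hd_error (map pr rho) = Some (Wx m))
    by (rewrite El; apply descent_hd; [unfold inrange in Hm; lia | exact Hv]).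
  assert (Ht : is_track K rho).
  { apply is_track_iff. split; [intros ->; discriminate | rewrite El; apply descent_consec, Hmn]. }
  assert (H0 : In S0 (map pr rho)) by (rewrite El; apply In_descent; left; reflexivity).
  exists rho. split; [exact Ht | split; [exact Hh|]]. split; [split | split].
  - apply hsat_atom. rewrite El. apply descent_rmu_As.
  - intros Hall. rewrite hsat_atom in Hall. exact (proj1 (rmu_At J S0) (Hall S0 H0) eq_refl).
  - apply hsat_Fchecks. rewrite El. intros i. exact (descent_checks J Hwf m i Hv).
  - rewrite (hsat_negcheck k m rho Hq Hmk Ht Hh H0), El.
    intros j Hj. apply In_descent_Wxb in Hj. tauto.
Qed.

Lemma psi_correct_all k : psi_correct k.
Proof.
  induction k as [|k IH].
  - intros m rho Hm Hk. unfold inrange in Hm; lia.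
  - intros m rho Hm Hk Hl. rewrite psi_succ, (hsat_HA J hn rho _ _ Hl). split.
    + apply vI_of_sat_from_phi; assumption.
    + apply sat_from_phi_of_vI; assumption.
Qed.

End Correctness.

Theorem mainTheorem6 (I : snsat) (Hwf : snsat_wf I) (hn : 1 <= nI I) :
  vI I (nI I) <->
  kmodels (KI I hn) (HImp (HBoxB HBot) (psi I (nI I))).
Proof.
  pose (w0 := Kw0 (KI I hn)).
  assert (Hw0 : forall rho, is_track (KI I hn) rho -> hd_error rho = Some w0 ->
                  hsat (KI I hn) rho (HBoxB HBot) -> rho = [w0]).
  { intros [|a [|b rho]] [Hne _] Hh Hb; simpl in Hh; [congruence | congruence |].
    apply hsat_BoxB_bot in Hb. simpl in Hb; lia. }
  assert (Hpsi : hsat (KI I hn) [w0] (psi I (nI I)) <-> vI I (nI I))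
    by (apply (psi_correct_all I Hwf hn); [unfold inrange | | reflexivity]; lia).
  split.
  - intros Hv rho Htr Hh. apply hsat_HImp. intros Hb.
    rewrite (Hw0 rho Htr Hh Hb). apply Hpsi, Hv.
  - intros Hm. apply Hpsi.
    refine (proj1 (hsat_HImp I hn [w0] _ _) (Hm [w0] _ eq_refl) _).
    + split; [discriminate | exact Logic.I].
    + apply hsat_BoxB_bot. simpl; lia.
Qed.
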